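(* Let $m\ge1$ and let $\mathcal{Y}$ be a subset of the group $\mathbb{U}_m(\mathbb{Q})$ of upper unitriangular $m\times m$ rational matrices such that the heights of the matrices in $\mathcal{Y}$ are bounded by a constant. Let $s_1:=\min\{d\in\mathbb{Z}_{>0}: dY\text{ has integer entries for all }Y\in\mathcal{Y}\}$. Then for any positive integer $t$ and any $Y_1,\dots,Y_t\in\mathcal{Y}$, the matrix $s_1^{m-1}Y_1\cdots Y_t$ has integer entries.
   Context: Upper unitriangular means upper triangular with all diagonal entries equal to $1$. The height of a rational matrix is the maximum of the naive heights $\max(|p|,|q|)$ of its entries $p/q$ in lowest terms. *)

From HB Require Import structures.
From mathcomp Require Import all_boot all_order all_algebra.
Set Implicit Arguments. Unset Strict Implicit. Unset Printing Implicit Defensive.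
Import Order.TTheory GRing.Theory Num.Theory.
Local Open Scope ring_scope.

Definition rat_height (x : rat) : nat := maxn `|numq x|%N `|denq x|%N.

Definition mx_height (m n : nat) (A : 'M[rat]_(m, n)) : nat :=
  \max_(i < m) \max_(j < n) rat_height (A i j).

Definition upper_unitriangular (m : nat) (A : 'M[rat]_m) : Prop :=
  (forall i j : 'I_m, (j < i)%N -> A i j = 0) /\ (forall i : 'I_m, A i i = 1).

Definition integral_mx (m n : nat) (A : 'M[rat]_(m, n)) : Prop :=
  forall i j, A i j \is a Num.int.

Definition mx_prod (m : nat) (Ys : seq 'M[rat]_m) : 'M[rat]_m :=
  foldr (fun A B => A *m B) 1%:M Ys.

From HB Require Import structures.
From mathcomp Require Import all_boot all_order all_algebra.
From mathcomp Require Import zify ring.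
Import Order.TTheory GRing.Theory Num.Theory.
Local Open Scope ring_scope.

(* Let D = diag(1, c, ..., c^(m-1)).  An upper triangular A with (c A)_ij
   integral and ones on the diagonal has D A D^-1 integral, since its (i, j)
   entry is c^(j-i) A_ij.  Such "c-weighted" matrices form a multiplicative
   monoid (the weights c^(k-i) c^(j-k) = c^(j-i) multiply along i <= k <= j),
   so every product Y_1 ... Y_t is c-weighted, and c^(m-1) clears all the
   denominators because j - i <= m - 1. *)

Section WeightedUpperMatrices.

Variables (R : comNzRingType) (S : subringClosed R) (c : R).
Hypothesis c_in_S : c \in S.

Definition weighted_upper_mx {n : nat} (A : 'M[R]_n) : Prop :=
  forall i j : 'I_n, ((j < i)%N -> A i j = 0) /\
                     ((i <= j)%N -> c ^+ (j - i) * A i j \in S).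

Lemma weighted_upper_mx1 (n : nat) : weighted_upper_mx (1%:M : 'M[R]_n).
Proof.
move=> i j; rewrite mxE; split.
  by move=> lt_ji; rewrite -val_eqE /= gtn_eqF.
by move=> _; rewrite rpredM ?rpredX //; case: (i == j); rewrite ?rpred1 ?rpred0.
Qed.

Lemma weighted_upper_mxM (n : nat) (A B : 'M[R]_n) :
  weighted_upper_mx A -> weighted_upper_mx B -> weighted_upper_mx (A *m B).
Proof.
move=> wA wB i j; rewrite mxE; split.
  move=> lt_ji; apply: big1 => k _.
  case: (ltnP k i) => [lt_ki | le_ik]; first by rewrite (proj1 (wA i k)) ?mul0r.
  by rewrite (proj1 (wB k j)) ?mulr0 // (leq_trans lt_ji le_ik).
move=> le_ij; rewrite mulr_sumr; apply: rpred_sum => k _.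
case: (ltnP k i) => [lt_ki | le_ik].
  by rewrite (proj1 (wA i k)) // mul0r mulr0 rpred0.
case: (ltnP j k) => [lt_jk | le_kj].
  by rewrite (proj1 (wB k j)) // mulr0 mulr0 rpred0.
have -> : (j - i = (k - i) + (j - k))%N by lia.
have -> : c ^+ (k - i + (j - k)) * (A i k * B k j)
        = (c ^+ (k - i) * A i k) * (c ^+ (j - k) * B k j) by rewrite exprD; ring.
by rewrite rpredM //; [apply: (proj2 (wA i k)) | apply: (proj2 (wB k j))].
Qed.

Lemma weighted_upper_mx_prod (n : nat) (As : seq 'M[R]_n) :
  (forall A, A \in As -> weighted_upper_mx A) ->
  weighted_upper_mx (foldr (fun A B => A *m B) 1%:M As).
Proof.
elim: As => [|A As IH] wAs /=; first exact: weighted_upper_mx1.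
apply: weighted_upper_mxM; first by apply: wAs; rewrite mem_head.
by apply: IH => B B_in; apply: wAs; rewrite in_cons B_in orbT.
Qed.

Lemma weighted_upper_mx_unitriangular (n : nat) (A : 'M[R]_n) :
  (forall i j : 'I_n, (j < i)%N -> A i j = 0) -> (forall i, A i i = 1) ->
  (forall i j, c * A i j \in S) -> weighted_upper_mx A.
Proof.
move=> A_trig A_diag cA_in_S i j; split; first exact: A_trig.
rewrite leq_eqVlt => /orP[/eqP/val_inj <- | lt_ij].
  by rewrite subnn expr0 mul1r A_diag rpred1.
by rewrite -(subnSK lt_ij) exprSr -mulrA rpredM ?rpredX.
Qed.

Lemma weighted_upper_mx_scale (n : nat) (A : 'M[R]_n) :
  weighted_upper_mx A -> forall i j, (c ^+ n.-1 *: A) i j \in S.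
Proof.
move=> wA i j; rewrite mxE; have [A_trig wAij] := wA i j.
case: (ltnP j i) => [lt_ji | le_ij]; first by rewrite A_trig // mulr0 rpred0.
have -> : n.-1 = (n.-1 - (j - i) + (j - i))%N by have := ltn_ord j; lia.
by rewrite exprD -mulrA rpredM ?rpredX ?wAij.
Qed.

End WeightedUpperMatrices.

Theorem lemma8p3 (m : nat) (Yset : 'M[rat]_m -> Prop) (s1 : nat) :
  (1 <= m)%N ->
  (forall Y, Yset Y -> upper_unitriangular Y) ->
  (exists C : nat, forall Y, Yset Y -> (mx_height Y <= C)%N) ->
  (* s1 is the least positive integer d with d*Y integral for all Y in Yset *)
  (0 < s1)%N ->
  (forall Y, Yset Y -> integral_mx (s1%:R *: Y)) ->
  (forall d : nat, (0 < d)%N -> (forall Y, Yset Y -> integral_mx (d%:R *: Y)) ->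
     (s1 <= d)%N) ->
  forall (t : nat) (Ys : seq 'M[rat]_m),
    (0 < t)%N -> size Ys = t -> (forall Y, Y \in Ys -> Yset Y) ->
    integral_mx ((s1 ^ (m - 1))%:R *: mx_prod Ys).
Proof.
move=> _ Yset_unitriangular _ _ s1Y_integral _ t Ys _ _ Ys_in_Yset.
rewrite natrX subn1; apply: weighted_upper_mx_scale; first exact: rpred_nat.
apply: weighted_upper_mx_prod; first exact: rpred_nat.
move=> Y /Ys_in_Yset Y_in; have [Y_trig Y_diag] := Yset_unitriangular Y Y_in.
apply: weighted_upper_mx_unitriangular => //; first exact: rpred_nat.
by move=> i j; have := s1Y_integral Y Y_in i j; rewrite mxE.
Qed.
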